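(* Let $(X,\mathscr{R})$ be a reaction network with stoichiometric matrix $S$, and let $A\in\mathbb{N}_0^{\mathcal{A}\times X}$ be an sf-instance. Consider the statements, for $x,y\in X$: (i) $x$ and $y$ are obligatory isomers; (ii) $A_{ax}=A_{ay}$ for all $a\in\mathcal{A}$. If $\operatorname{im}A^\top=\ker S^\top$, then (i) and (ii) are equivalent. If $\operatorname{im}A^\top\subseteq\ker S^\top$, then (i) implies (ii).
   Context: A reaction network (RN) $(X,\mathscr{R})$ consists of a finite non-empty set $X$ of species and a finite non-empty set $\mathscr{R}$ of reactions. Each reaction $r$ is given by stoichiometric coefficients $s^-_{xr},s^+_{xr}\in\mathbb{N}_0$. The stoichiometric matrix $S\in\mathbb{Z}^{X\times\mathscr{R}}$ has entries $S_{xr}=s^+_{xr}-s^-_{xr}$. The paper assumes throughout that RNs are closed: every reaction $r$ has $x,y$ with $S_{xr}<0<S_{yr}$. An sf-instance is a matrix $A\in\mathbb{N}_0^{\mathcal{A}\times X}$, for some non-empty finite set $\mathcal{A}$, with every column nonzero and $AS=0$. Distinct $x,y\in X$ are obligatory isomers if there is $v\in\mathbb{Z}^{\mathscr{R}}$ with: - $-[Sv]_x=[Sv]_y=k$ for some positive integer $k$; - $[Sv]_z=0$ for all $z\in X\setminus\{x,y\}$. *)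

From HB Require Import structures.
From mathcomp Require Import all_boot all_order all_algebra.
Set Implicit Arguments. Unset Strict Implicit. Unset Printing Implicit Defensive.
Import Order.TTheory GRing.Theory Num.Theory.
Local Open Scope ring_scope.

(* A reaction network (X, Reactions) is given by species X, reactions Rn
   (finite, non-empty types) and stoichiometric coefficients
   sminus x r = s^-_{xr}, splus x r = s^+_{xr} in N_0. *)

Definition stoich (X Rn : finType) (sminus splus : X -> Rn -> nat) :
  X -> Rn -> int :=
  fun x r => (splus x r)%:Z - (sminus x r)%:Z.

Definition closed_RN (X Rn : finType) (S : X -> Rn -> int) : Prop :=
  forall r : Rn, exists x y : X, S x r < 0 /\ 0 < S y r.

Definition Smul (X Rn : finType) (S : X -> Rn -> int) (v : Rn -> int) (x : X) : int :=
  \sum_(r : Rn) S x r * v r.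

Definition sf_instance (Atoms X Rn : finType) (S : X -> Rn -> int)
  (A : Atoms -> X -> nat) : Prop :=
  (forall x : X, exists a : Atoms, A a x != 0%N) /\
  (forall (a : Atoms) (r : Rn), \sum_(x : X) (A a x)%:Z * S x r = 0).

Definition obligatory_isomers (X Rn : finType) (S : X -> Rn -> int) (x y : X) : Prop :=
  x <> y /\
  exists (v : Rn -> int) (k : nat),
    (0 < k)%N /\
    - Smul S v x = k%:Z /\ Smul S v y = k%:Z /\
    (forall z : X, z <> x -> z <> y -> Smul S v z = 0).

Definition in_im_AT (R : realFieldType) (Atoms X : finType)
  (A : Atoms -> X -> nat) (u : X -> R) : Prop :=
  exists lam : Atoms -> R, forall x : X, u x = \sum_(a : Atoms) lam a * (A a x)%:R.

Definition in_ker_ST (R : realFieldType) (X Rn : finType)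
  (S : X -> Rn -> int) (u : X -> R) : Prop :=
  forall r : Rn, \sum_(x : X) u x * (S x r)%:~R = 0.

From HB Require Import structures.
From mathcomp Require Import all_boot all_order all_algebra.
Import Order.TTheory GRing.Theory Num.Theory.
Local Open Scope ring_scope.

(* If [x] and [y] are obligatory isomers, some integral flux [v] has
   [S v = k (e_y - e_x)]; pairing it with a row [A_a] of the sf-instance,
   which is orthogonal to the image of [S], gives [k (A_ay - A_ax) = 0].
   Conversely, by the Fredholm alternative over [Q] either [e_y - e_x] lies in
   the rational image of [S], and clearing denominators yields an integral
   [v], or some rational [u] in [ker S^T] separates [x] from [y]; when
   [ker S^T = im A^T] such a [u] is a combination of rows of [A], which cannot
   separate two equal columns. *)

Definition isomer_shift {R : pzRingType} {X : finType} (x y z : X) : R :=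
  (z == y)%:R - (z == x)%:R.

Lemma sum_isomer_shift_mul (R : pzRingType) (X : finType) (x y : X) (u : X -> R) :
  \sum_z isomer_shift x y z * u z = u y - u x.
Proof.
have sum_delta (t : X) : \sum_z (z == t)%:R * u z = u t.
  by under eq_bigr do rewrite mulr_natl mulrb; rewrite -big_mkcond big_pred1_eq.
by under eq_bigr do rewrite mulrBl; rewrite sumrB !sum_delta.
Qed.

Lemma sum_enum_val (R : nmodType) (I : finType) (F : I -> R) :
  \sum_i F i = \sum_(k < #|I|) F (enum_val k).
Proof. by rewrite -(big_enum_val (A := I)); apply: eq_bigl => i; rewrite inE. Qed.

Lemma fredholm_alternative {F : fieldType} {I J : finType} (M : I -> J -> F)
    (b : I -> F) :
  (exists w : J -> F, forall i, \sum_j M i j * w j = b i) \/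
  (exists2 u : I -> F, forall j, \sum_i u i * M i j = 0 & \sum_i b i * u i != 0).
Proof.
pose MT : 'M[F]_(#|J|, #|I|) := \matrix_(j, i) M (enum_val i) (enum_val j).
pose rb : 'rV[F]_#|I| := \row_i b (enum_val i).
have [/submxP [w rbE] | rb_notin] := boolP (rb <= MT)%MS.
  left; exists (fun j => w 0 (enum_rank j)) => i.
  have := congr1 (fun N : 'rV_ _ => N 0 (enum_rank i)) rbE.
  rewrite !mxE enum_rankK => ->; rewrite sum_enum_val.
  by apply: eq_bigr => k _; rewrite !mxE enum_valK enum_rankK mulrC.
right; pose C := cokermx MT.
have [j rbC_j] : exists j, (rb *m C) 0 j != 0.
  apply/existsP; apply: contraNT rb_notin => /existsPn rbC0.
  rewrite submxE; apply/eqP/rowP => j.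
  by rewrite [RHS]mxE; apply/eqP/negPn/rbC0.
exists (fun i => C (enum_rank i) j).
  move=> r.
  have := congr1 (fun N : 'M_(_, _) => N (enum_rank r) j) (mulmx_coker MT).
  rewrite !mxE => E; apply: etrans E; rewrite sum_enum_val.
  by apply: eq_bigr => k _; rewrite !mxE enum_rankK enum_valK mulrC.
suff sum_rbC : \sum_i b i * C (enum_rank i) j = (rb *m C) 0 j by rewrite sum_rbC.
by rewrite mxE sum_enum_val; apply: eq_bigr => k _; rewrite enum_valK [rb _ _]mxE.
Qed.

Lemma rat_common_denominator {I : finType} (w : I -> rat) :
  exists2 d : int, 0 < d & exists v : I -> int, forall i, (v i)%:~R = w i * d%:~R.
Proof.
exists (\prod_i denq (w i)); first by apply: prodr_gt0 => i _; apply: denq_gt0.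
exists (fun i => numq (w i) * \prod_(j | j != i) denq (w j)) => i.
by rewrite [in RHS](bigD1 i) //= !intrM numqE mulrA.
Qed.

Section ObligatoryIsomers.

Variables (X Rn : finType) (S : X -> Rn -> int).

Lemma obligatory_isomersP (x y : X) :
  obligatory_isomers S x y <->
  x <> y /\ exists v (k : nat),
    (0 < k)%N /\ forall z, Smul S v z = isomer_shift x y z * k%:Z.
Proof.
have yx_neq (neq_xy : x <> y) : (y == x) = false by apply/eqP => /esym.
have xy_neq (neq_xy : x <> y) : (x == y) = false by apply/eqP.
rewrite /isomer_shift; split=> -[neq_xy [v [k [k_gt0 Sv]]]].
  split=> //; exists v, k; split=> // z; case: Sv => Svx [Svy Sv0].
  have [->|nzy] := eqVneq z y; first by rewrite yx_neq // subr0 mul1r.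
  have [->|nzx] := eqVneq z x; last by rewrite subrr mul0r Sv0 //; apply/eqP.
  by rewrite -[LHS]opprK Svx sub0r mulN1r.
split=> //; exists v, k; split=> //.
rewrite !Sv !eqxx xy_neq // yx_neq //= sub0r subr0 mulN1r mul1r opprK.
do 2!split=> //; move=> z /eqP/negbTE nzx /eqP/negbTE nzy.
by rewrite Sv nzx nzy subrr mul0r.
Qed.

Lemma sum_mul_Smul (c : X -> int) (v : Rn -> int) :
  \sum_z c z * Smul S v z = \sum_r (\sum_z c z * S z r) * v r.
Proof.
under eq_bigr do rewrite /Smul mulr_sumr.
rewrite exchange_big /=; apply: eq_bigr => r _.
by rewrite mulr_suml; apply: eq_bigr => z _; rewrite mulrA.
Qed.

Lemma obligatory_isomers_eq_col (Atoms : finType) (A : Atoms -> X -> nat) :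
  (forall a r, \sum_z (A a z)%:Z * S z r = 0) ->
  forall x y, obligatory_isomers S x y -> forall a, A a x = A a y.
Proof.
move=> AS0 x y /obligatory_isomersP[_ [v [k [k_gt0 Sv]]]] a.
have := sum_mul_Smul (fun z => (A a z)%:Z) v.
rewrite [X in _ = X]big1 => [|r _]; last by rewrite AS0 mul0r.
under eq_bigr do rewrite Sv mulrCA.
have k_neq0 : k%:Z != 0 by rewrite eqz_nat -lt0n.
rewrite sum_isomer_shift_mul -mulrBl => /eqP.
by rewrite mulf_eq0 (negbTE k_neq0) orbF subr_eq0 => /eqP[->].
Qed.

Lemma obligatory_isomers_of_rat_solution (x y : X) (w : Rn -> rat) :
  x <> y -> (forall z, \sum_r (S z r)%:~R * w r = isomer_shift x y z) ->
  obligatory_isomers S x y.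
Proof.
move=> neq_xy Sw; have [d d_gt0 [v vE]] := rat_common_denominator w.
apply/obligatory_isomersP; split=> //; exists v, `|d|%N.
rewrite absz_gt0 gt_eqF //; split=> // z; rewrite gtz0_abs //.
apply: (@intr_inj rat); rewrite rmorphM /= /isomer_shift rmorphB /= !rmorph_nat.
rewrite -[_ - _]Sw mulr_suml rmorph_sum; apply: eq_bigr => r _.
by rewrite rmorphM /= vE mulrA.
Qed.

Lemma in_ker_ST_ratr (R : realFieldType) (u : X -> rat) :
  in_ker_ST S u -> in_ker_ST S (fun z => ratr (u z) : R).
Proof.
move=> uS r; rewrite -[RHS](rmorph0 (@ratr R)) -(uS r) rmorph_sum /=.
by apply: eq_bigr => z _; rewrite rmorphM /= ratr_int.
Qed.

Lemma obligatory_isomers_of_ker (R : realFieldType) (x y : X) :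
  x <> y -> (forall u : X -> R, in_ker_ST S u -> u x = u y) ->
  obligatory_isomers S x y.
Proof.
move=> neq_xy ker_eq.
have [[w Sw] | [u uS]] :=
  fredholm_alternative (fun z r => (S z r)%:~R : rat) (isomer_shift x y).
  exact: obligatory_isomers_of_rat_solution Sw.
rewrite sum_isomer_shift_mul subr_eq0 => /eqP[].
apply: (fmorph_inj (@ratr R)); apply/esym/(ker_eq (fun z => ratr (u z))).
exact: in_ker_ST_ratr.
Qed.

End ObligatoryIsomers.

Lemma in_im_AT_eq (R : realFieldType) (Atoms X : finType) (A : Atoms -> X -> nat)
    (u : X -> R) (x y : X) :
  in_im_AT A u -> (forall a, A a x = A a y) -> u x = u y.
Proof.
by move=> [lam uE] eq_col; rewrite !uE; apply: eq_bigr => a _; rewrite eq_col.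
Qed.

Theorem theorem7 (R : realFieldType) (X Rn Atoms : finType)
  (sminus splus : X -> Rn -> nat) (A : Atoms -> X -> nat) :
  (0 < #|X|)%N -> (0 < #|Rn|)%N -> (0 < #|Atoms|)%N ->
  closed_RN (stoich sminus splus) ->
  sf_instance (stoich sminus splus) A ->
  forall x y : X, x <> y ->
    ((forall u : X -> R, in_im_AT A u <-> in_ker_ST (stoich sminus splus) u) ->
       (obligatory_isomers (stoich sminus splus) x y <-> forall a : Atoms, A a x = A a y))
    /\
    ((forall u : X -> R, in_im_AT A u -> in_ker_ST (stoich sminus splus) u) ->
       (obligatory_isomers (stoich sminus splus) x y -> forall a : Atoms, A a x = A a y)).
Proof.
move=> _ _ _ _ [_ AS0] x y neq_xy.
split=> [ker_im | _]; last exact: obligatory_isomers_eq_col.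
split; first exact: obligatory_isomers_eq_col.
move=> eq_col; apply: (@obligatory_isomers_of_ker _ _ _ R) => // u /ker_im uA.
exact: in_im_AT_eq eq_col.
Qed.
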